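(* Let $(G,\sigma)$ be a planar, color-connected colored graph with a fixed plane embedding and vertices $s,t$ connected in $G$. If $S$ is an inclusion-minimal $s$-$t$ color separator, then the vertices of the color-intersection graph $\mathcal{G}$ corresponding to the colors in $S$ induce a connected subgraph of $\mathcal{G}$.
   Context: $\sigma:V\to 2^{[m]}$; color-connected means for each color $c$ the vertices whose color set contains $c$ induce a connected subgraph. $V(C)=\{v:\sigma(v)\cap C\ne\emptyset\}$; $S\subseteq[m]$ is an $s$-$t$ color separator if $s,t$ are disconnected in $G-V(S)$. For a face $f$ of $G$, $\sigma(f)$ is the union of $\sigma(u)\cup\sigma(v)$ over boundary edges $uv$ of $f$. The color-intersection graph $\mathcal{G}$ has a vertex $c_i$ per color $i\in[m]$ and an edge $c_ic_j$ whenever some face $f$ satisfies $\{i,j\}\subseteq\sigma(f)$. *)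

From mathcomp Require Import all_boot.
Set Implicit Arguments. Unset Strict Implicit. Unset Printing Implicit Defensive.

(* Plane graphs as combinatorial maps (rotation systems) of genus 0.
   V : vertices, D : darts (half-edges).
   tl d    : the vertex at which dart d starts,
   alpha d : the opposite dart of the same edge (fixed-point-free involution),
   rot d   : the next dart counter-clockwise around the vertex tl d. *)
Section PlaneMap.
Variables (V D : finType) (tl : D -> V) (alpha rot : D -> D).

(* face permutation: facial walks are the orbits of phi *)
Definition phi (d : D) : D := rot (alpha d).

Definition map_rel : rel D := fun d e => (e == alpha d) || (e == rot d).

Definition used_vertices : {set V} := [set tl d | d : D].

Definition plane_map : Prop :=
  (involutive alpha) /\
  (forall d, alpha d != d) /\
  (injective rot) /\
  (forall d, tl (rot d) = tl d) /\
  (forall d e, tl d = tl e -> fconnect rot d e) /\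
      (* simple graph: no loops, no parallel edges *)
  (forall d, tl (alpha d) != tl d) /\
  (forall d e, tl d = tl e -> tl (alpha d) = tl (alpha e) -> d = e) /\
      (* genus 0 (Euler's formula on every component):
         sum over components of (V_i - E_i + F_i) = 2 * #components,
         with E = #|D|/2, written without division *)
  (2 * (#|used_vertices| + fcard phi (mem D)) = #|D| + 4 * n_comp map_rel (mem D)).

Definition adj : rel V := fun u v => [exists d, (tl d == u) && (tl (alpha d) == v)].

End PlaneMap.

Definition induced_rel (T : finType) (e : rel T) (A : {set T}) : rel T :=
  fun x y => [&& x \in A, y \in A & e x y].

Definition induced_connected (T : finType) (e : rel T) (A : {set T}) : Prop :=
  forall x y, x \in A -> y \in A -> connect (induced_rel e A) x y.

Section Colors.
Variables (V D : finType) (tl : D -> V) (alpha rot : D -> D) (m : nat)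
          (sigma : V -> {set 'I_m}).

Definition color_class (c : 'I_m) : {set V} := [set v | c \in sigma v].

Definition color_connected : Prop :=
  forall c, induced_connected (adj tl alpha) (color_class c).

Definition VC (C : {set 'I_m}) : {set V} := [set v | ~~ [disjoint sigma v & C]].

(* s and t are disconnected in G - V(S)
   (in particular if s or t itself belongs to V(S)) *)
Definition color_separator (s t : V) (S : {set 'I_m}) : Prop :=
  ~ (s \notin VC S /\ t \notin VC S /\
     connect (induced_rel (adj tl alpha) (~: VC S)) s t).

Definition minimal_color_separator (s t : V) (S : {set 'I_m}) : Prop :=
  color_separator s t S /\ forall S' : {set 'I_m}, S' \proper S -> ~ color_separator s t S'.

(* sigma(f) for the face whose facial walk contains dart d *)
Definition face_colors (d : D) : {set 'I_m} :=
  \bigcup_(e | fconnect (phi alpha rot) d e) (sigma (tl e) :|: sigma (tl (alpha e))).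

Definition cig_adj : rel 'I_m :=
  fun i j => (i != j) && [exists d, (i \in face_colors d) && (j \in face_colors d)].

End Colors.

(* Over a field of characteristic 2, the dart chains of a plane map with zero
   boundary (the cycles) are spanned by the face-invariant and the
   edge-invariant chains: both kinds are cycles, and Euler's formula makes the
   dimensions agree.  So a cochain that is invariant under the edge involution
   and orthogonal to every face-invariant chain vanishes on all cycles.
   If S were minimal but disconnected in the color-intersection graph, split it
   into a component S1 and the rest S2: no face sees both V(S1) and V(S2), and
   neither part separates, so s and t are joined by a walk avoiding V(S1) and by
   one avoiding V(S2).  If they were disconnected in G - V(S), pair the cycle
   formed by these two walks with the darts joining the component K of s in
   G - V(S) to V(S1): every face contains an even number of such darts, the
   first walk uses none, and the second, which leaves K, uses an odd number. *)

From mathcomp Require Import all_boot all_algebra.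
From mathcomp Require Import zify.
Set Implicit Arguments. Unset Strict Implicit. Unset Printing Implicit Defensive.
Import GRing.Theory.
Local Open Scope ring_scope.

Section Sums.
Variables (R : pzRingType) (T : finType).

Lemma sum_mul_natr_eq (f : T -> R) u : \sum_t f t * (t == u)%:R = f u.
Proof. by under eq_bigr do rewrite mulr_natr mulrb; rewrite -big_mkcond big_pred1_eq. Qed.

Lemma sum_count_mem (s : seq T) (h : T -> R) :
  \sum_t (count_mem t s)%:R * h t = \sum_(t <- s) h t.
Proof.
elim: s => [|x s IHs]; first by rewrite big_nil big1 // => t _; rewrite mul0r.
under eq_bigr do rewrite /= natrD mulrDl.
rewrite big_split /= IHs big_cons; congr (_ + _).
by under eq_bigr do rewrite mulr_natl -mulr_natr eq_sym; rewrite sum_mul_natr_eq.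
Qed.

Lemma sum_invariant_mul_coboundary (g : T -> T) (a f : T -> R) :
  injective g -> (forall t, a (g t) = a t) -> \sum_t a t * (f (g t) - f t) = 0.
Proof.
move=> g_inj ag; under eq_bigr do rewrite mulrBr.
rewrite sumrB [X in _ - X](reindex_inj g_inj) /=.
by under [X in _ - X]eq_bigr do rewrite ag; rewrite subrr.
Qed.

End Sums.

Lemma sum_fixedpointfree_involution_pchar2 (R : nzRingType) (T : finType)
    (g : T -> T) (h : T -> R) :
  2%N \in [pchar R] -> involutive g -> (forall t, g t != t) ->
  (forall t, h (g t) = h t) -> \sum_t h t = 0.
Proof.
move=> R2 gK g_fpf hg; pose below t := (enum_rank t < enum_rank (g t))%N.
have belowN t : ~~ below (g t) = below t.
  rewrite /below gK -leqNgt leq_eqVlt.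
  by case: eqP => // /val_inj/enum_rank_inj tg; move: (g_fpf t); rewrite -tg eqxx.
rewrite (bigID below) /= [X in _ + X](reindex_inj (inv_inj gK)) /=.
under [X in _ + X]eq_bigl do rewrite belowN.
by under [X in _ + X]eq_bigr do rewrite hg; rewrite addrr_pchar2.
Qed.

Lemma connect_invariant (T : finType) (R : eqType) (e : rel T) (f : T -> R) :
  (forall x y, e x y -> f y = f x) -> forall x y, connect e x y -> f y = f x.
Proof.
move=> fe x y xy; have cl : closed e [pred z | f z == f x] by move=> u w /fe; rewrite !inE => ->.
by apply/eqP; have := closed_connect cl xy; rewrite !inE eqxx => <-.
Qed.

Section FunMatrices.
Variable F : fieldType.

Definition rv_at (T : finType) (v : 'rV[F]_#|T|) (t : T) : F := v 0 (enum_rank t).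

Definition row_of_fun (T : finType) (f : T -> F) : 'rV[F]_#|T| :=
  \row_i f (enum_val i).

Definition mx_of_fun (T U : finType) (g : T -> U -> F) : 'M[F]_(#|T|, #|U|) :=
  \matrix_(i, j) g (enum_val i) (enum_val j).

Definition diff_mx (T : finType) (g : T -> T) : 'M[F]_#|T| :=
  mx_of_fun (fun t u => (t == g u)%:R - (t == u)%:R).

Lemma rv_at_row_of_fun (T : finType) (f : T -> F) t : rv_at (row_of_fun f) t = f t.
Proof. by rewrite /rv_at mxE enum_rankK. Qed.

Lemma rv_atD (T : finType) (v w : 'rV[F]_#|T|) t : rv_at (v + w) t = rv_at v t + rv_at w t.
Proof. by rewrite /rv_at mxE. Qed.

Lemma sum_rv_atD_mul (T : finType) (v w : 'rV[F]_#|T|) (h : T -> F) :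
  \sum_t rv_at (v + w) t * h t = \sum_t rv_at v t * h t + \sum_t rv_at w t * h t.
Proof. by under eq_bigr do rewrite rv_atD mulrDl; rewrite big_split. Qed.

Lemma rv_at0 (T : finType) t : rv_at (0 : 'rV[F]_#|T|) t = 0.
Proof. by rewrite /rv_at mxE. Qed.

Lemma rv_atP (T : finType) (v w : 'rV[F]_#|T|) : rv_at v =1 rv_at w <-> v = w.
Proof.
split=> [vw | -> //]; apply/rowP => i.
by have := vw (enum_val i); rewrite /rv_at enum_valK.
Qed.

Lemma rv_at_mulmx (T U : finType) (v : 'rV[F]_#|T|) (g : T -> U -> F) u :
  rv_at (v *m mx_of_fun g) u = \sum_t rv_at v t * g t u.
Proof.
rewrite /rv_at mxE (reindex enum_rank) /=; last exact/onW_bij/enum_rank_bij.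
by apply: eq_bigr => t _; rewrite mxE !enum_rankK.
Qed.

Lemma mul_mx_of_fun (T U W : finType) (g : T -> U -> F) (h : U -> W -> F) :
  mx_of_fun g *m mx_of_fun h = mx_of_fun (fun t w => \sum_u g t u * h u w).
Proof.
apply/matrixP => i j; rewrite !mxE (reindex enum_rank) /=; last exact/onW_bij/enum_rank_bij.
by apply: eq_bigr => u _; rewrite !mxE !enum_rankK.
Qed.

Lemma tr_mx_of_fun (T U : finType) (g : T -> U -> F) :
  (mx_of_fun g)^T = mx_of_fun (fun u t => g t u).
Proof. by apply/matrixP => i j; rewrite !mxE. Qed.

Lemma sub_kermx_funP (T U : finType) (v : 'rV[F]_#|T|) (g : T -> U -> F) :
  reflect (forall u, \sum_t rv_at v t * g t u = 0) (v <= kermx (mx_of_fun g))%MS.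
Proof.
apply: (iffP sub_kermxP) => [vg0 u | vg0].
  by rewrite -rv_at_mulmx vg0 rv_at0.
by apply/rv_atP => u; rewrite rv_at_mulmx vg0 rv_at0.
Qed.

Lemma kermx_diffP (T : finType) (g : T -> T) (v : 'rV[F]_#|T|) :
  reflect (forall u, rv_at v (g u) = rv_at v u) (v <= kermx (diff_mx g))%MS.
Proof.
have diffE u : \sum_t rv_at v t * ((t == g u)%:R - (t == u)%:R) = rv_at v (g u) - rv_at v u.
  by under eq_bigr do rewrite mulrBr; rewrite sumrB !sum_mul_natr_eq.
apply: (iffP (sub_kermx_funP _ _)) => vg u; last by rewrite diffE vg subrr.
by apply/eqP; rewrite -subr_eq0 -diffE vg.
Qed.

Lemma rank_le_card (T : finType) k (M : 'M[F]_(k, #|T|)) (W : {set T}) :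
  (forall v, (v <= M)%MS -> {in W, forall t, rv_at v t = 0} -> v = 0) ->
  (\rank M <= #|W|)%N.
Proof.
move=> vanish; pose P := mx_of_fun (fun (t : T) (w : {x | x \in W}) => (t == val w)%:R).
have capP : (M :&: kermx P)%MS = 0.
  apply/eqP/rowV0P => v; rewrite sub_capmx => /andP[vM /sub_kermx_funP vP].
  by apply: vanish => // t tW; rewrite -(vP (exist _ t tW)) sum_mul_natr_eq.
have := mxrank_mul_ker M P; rewrite capP mxrank0 addn0 => <-.
by rewrite (leq_trans (rank_leq_col _)) // card_sig.
Qed.

Lemma rank_le_n_comp (T : finType) (e : rel T) k (M : 'M[F]_(k, #|T|)) :
  connect_sym e ->
  (forall v, (v <= M)%MS -> forall x y, e x y -> rv_at v y = rv_at v x) ->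
  (\rank M <= n_comp e (mem T))%N.
Proof.
move=> e_sym invM.
have -> : n_comp e (mem T) = #|[set r | roots e r]|.
  by apply: eq_card => r; rewrite !inE andbT.
apply: rank_le_card => v vM v0; apply/rv_atP => t; rewrite rv_at0.
rewrite -(connect_invariant (invM v vM) (connect_root e t)).
by apply: v0; rewrite inE roots_root.
Qed.

Lemma fcard_le_rank_kermx_diff (T : finType) (g : T -> T) :
  injective g -> (fcard g (mem T) <= \rank (kermx (diff_mx g)))%N.
Proof.
move=> g_inj; pose Orb := mx_of_fun (fun (r : {x | froots g x}) t => (fconnect g (val r) t)%:R).
pose Sel := mx_of_fun (fun t (r : {x | froots g x}) => (t == val r)%:R).
have OrbK : (Orb <= kermx (diff_mx g))%MS.
  apply/row_subP => i; apply/kermx_diffP => u.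
  by rewrite /rv_at !mxE !enum_rankK -same_fconnect1_r.
have OrbSel : Orb *m Sel = 1%:M.
  rewrite mul_mx_of_fun; apply/matrixP => i j; rewrite !mxE sum_mul_natr_eq.
  have /eqP ri := valP (enum_val i); have /eqP rj := valP (enum_val j).
  rewrite -(root_connect (fconnect_sym g_inj)) ri rj.
  by rewrite (inj_eq val_inj) (inj_eq enum_val_inj).
have -> : fcard g (mem T) = #|{: {x | froots g x}}|.
  by rewrite card_sig; apply: eq_card => r; rewrite !inE andbT.
by have := mxrankM_maxl Orb Sel; rewrite OrbSel mxrank1 => /leq_trans->; rewrite ?mxrankS.
Qed.

End FunMatrices.

Section DartWalks.
Variables (V D : finType) (tl : D -> V) (alpha : D -> D).

Fixpoint dart_walk (x : V) (ds : seq D) (y : V) : bool :=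
  if ds is d :: ds' then (tl d == x) && dart_walk (tl (alpha d)) ds' y else x == y.

Lemma dart_walk_telescope (R : zmodType) (f : V -> R) x ds y :
  dart_walk x ds y -> \sum_(d <- ds) (f (tl (alpha d)) - f (tl d)) = f y - f x.
Proof.
elim: ds x => [|d ds IHds] x /=; first by move=> /eqP->; rewrite big_nil subrr.
by case/andP=> /eqP<- /IHds; rewrite big_cons => ->; rewrite addrC addrA subrK.
Qed.

Lemma connect_dart_walk (C : {set V}) x y :
  connect (induced_rel (adj tl alpha) C) x y ->
  exists2 ds, dart_walk x ds y & all (fun d => (tl d \in C) && (tl (alpha d) \in C)) ds.
Proof.
move=> /connectP[p]; elim: p x => [|z p IHp] x /=.
  by move=> _ ->; exists [::]; rewrite /= ?eqxx.
case/andP=> /and3P[xC zC /existsP[d /andP[/eqP dx /eqP dz]]] /IHp pz /pz[ds wds Cds].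
by exists (d :: ds); rewrite /= ?dx ?dz ?eqxx ?xC ?zC.
Qed.

End DartWalks.

Section Char2Homology.
Variables (F : fieldType).
Hypothesis pchar_F : 2%N \in [pchar F].

Lemma diff_mx_sub_kermx (T : finType) (g : T -> T) :
  involutive g -> (diff_mx F g <= kermx (diff_mx F g))%MS.
Proof.
move=> gK; apply/row_subP => i; apply/kermx_diffP => u.
rewrite /rv_at !mxE !enum_rankK gK.
by rewrite !(oppr_pchar2 pchar_F) addrC.
Qed.

Lemma card_le_double_rank_kermx_diff (T : finType) (g : T -> T) :
  involutive g -> (#|T| <= 2 * \rank (kermx (diff_mx F g)))%N.
Proof.
move=> gK; have := mxrankS (diff_mx_sub_kermx gK).
by rewrite mxrank_ker; have := rank_leq_row (diff_mx F g); lia.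
Qed.

Section PlaneMap.
Variables (V D : finType) (tl : D -> V) (alpha rot : D -> D).

Definition boundary_mx : 'M[F]_(#|D|, #|V|) :=
  mx_of_fun (fun d x => (x == tl (alpha d))%:R - (x == tl d)%:R).

Definition walk_chain (ds : seq D) : 'rV[F]_#|D| :=
  row_of_fun (fun d => (count_mem d ds)%:R).

Lemma walk_chain_pairing ds (h : D -> F) :
  \sum_d rv_at (walk_chain ds) d * h d = \sum_(d <- ds) h d.
Proof. by under eq_bigr do rewrite rv_at_row_of_fun; rewrite sum_count_mem. Qed.

Lemma walk_chainD_cycle x ds1 ds2 y :
  dart_walk tl alpha x ds1 y -> dart_walk tl alpha x ds2 y ->
  ((walk_chain ds1 + walk_chain ds2)%R <= kermx boundary_mx)%MS.
Proof.
move=> w1 w2; rewrite /boundary_mx; apply/sub_kermx_funP => z.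
rewrite sum_rv_atD_mul !walk_chain_pairing.
pose delta v : F := (z == v)%:R.
rewrite (dart_walk_telescope delta w1) (dart_walk_telescope delta w2).
exact: addrr_pchar2.
Qed.

Hypotheses (alphaK : involutive alpha) (alpha_fpf : forall d, alpha d != d)
  (rot_inj : injective rot) (tl_rot : forall d, tl (rot d) = tl d).

Local Notation face := (phi alpha rot).
Local Notation comps := (n_comp (map_rel alpha rot) (mem D)).
Local Notation cycles := (kermx boundary_mx).
Local Notation faces := (kermx (diff_mx F face)).
Local Notation edges := (kermx (diff_mx F alpha)).

Lemma face_inj : injective face.
Proof. by move=> d e /rot_inj /(inv_inj alphaK). Qed.

Lemma tl_face d : tl (face d) = tl (alpha d).
Proof. exact: tl_rot. Qed.

Lemma map_rel_sym : connect_sym (map_rel alpha rot).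
Proof.
have edge_back x y : map_rel alpha rot x y -> connect (map_rel alpha rot) y x.
  case/orP=> /eqP->; first by apply: connect1; rewrite /map_rel alphaK eqxx.
  apply: (connect_sub _ (_ : fconnect rot (rot x) x)).
    by move=> u w /eqP<-; apply: connect1; rewrite /map_rel eqxx orbT.
  by rewrite fconnect_sym // fconnect1.
have back x y : connect (map_rel alpha rot) x y -> connect (map_rel alpha rot) y x.
  move=> /connectP[p]; elim: p x => [|z p IHp] x /=; first by move=> _ ->.
  by case/andP=> /edge_back zx /IHp zp /zp yz; apply: connect_trans yz zx.
by move=> x y; apply/idP/idP; apply: back.
Qed.

Lemma kermx_diff_sub_cycles (g : D -> D) :
  injective g -> (forall d, tl (g d) = tl (alpha d)) ->
  (kermx (diff_mx F g) <= cycles)%MS.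
Proof.
move=> g_inj tlg; apply/row_subP => i.
have /kermx_diffP vg := row_sub i (kermx (diff_mx F g)).
rewrite /boundary_mx; apply/sub_kermx_funP => x; under eq_bigr do rewrite -tlg.
exact: (sum_invariant_mul_coboundary (fun d => (x == tl d)%:R) g_inj vg).
Qed.

Lemma rank_faces_edges_cap : (\rank (faces :&: edges) <= comps)%N.
Proof.
apply: rank_le_n_comp map_rel_sym _ => v.
rewrite sub_capmx => /andP[/kermx_diffP vface /kermx_diffP valpha] x y.
case/orP=> /eqP->; first exact: valpha.
by have := vface (alpha x); rewrite /phi alphaK valpha.
Qed.

Lemma rank_kermx_tr_boundary :
  (\rank (kermx boundary_mx^T) <= #|~: used_vertices tl| + comps)%N.
Proof.
set roots_tl := tl @: [set r | roots (map_rel alpha rot) r].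
apply: leq_trans (_ : #|~: used_vertices tl :|: roots_tl| <= _)%N; last first.
  rewrite (leq_trans (leq_card_setU _ _)) // leq_add2l (leq_trans (leq_imset_card _ _)) //.
  by rewrite [X in (_ <= X)%N](_ : _ = #|[set r | roots (map_rel alpha rot) r]|) //;
    apply: eq_card => r; rewrite !inE andbT.
apply: rank_le_card => u; rewrite /boundary_mx tr_mx_of_fun => /sub_kermx_funP u_cocycle u0.
have u_inv d e : map_rel alpha rot d e -> rv_at u (tl e) = rv_at u (tl d).
  case/orP=> /eqP->; last by rewrite tl_rot.
  apply/eqP; rewrite -subr_eq0 -(u_cocycle d).
  by under eq_bigr do rewrite mulrBr; rewrite sumrB !sum_mul_natr_eq.
apply/rv_atP => x; rewrite rv_at0.
have [/imsetP[d _ ->]|unused] := boolP (x \in used_vertices tl); last first.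
  by apply: u0; rewrite !inE unused.
rewrite -(connect_invariant (f := fun d => rv_at u (tl d)) u_inv (connect_root _ d)).
by apply: u0; rewrite inE imset_f ?orbT // inE roots_root //; apply: map_rel_sym.
Qed.

Hypothesis euler :
  (2 * (#|used_vertices tl| + fcard face (mem D)) = #|D| + 4 * comps)%N.

Lemma cycles_sub_faces_edges : (cycles <= faces + edges)%MS.
Proof.
have faces_edges_sub : (faces + edges <= cycles)%MS.
  by rewrite addsmx_sub (kermx_diff_sub_cycles face_inj tl_face)
    (kermx_diff_sub_cycles (inv_inj alphaK) (fun=> erefl)).
have rank_cocycles : \rank (kermx boundary_mx^T) = (#|V| - \rank boundary_mx)%N.
  by rewrite mxrank_ker mxrank_tr.
have rank_boundary : (#|used_vertices tl| <= \rank boundary_mx + comps)%N.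
  have := rank_kermx_tr_boundary; have := cardsC (used_vertices tl).
  have := rank_leq_col boundary_mx.
  lia.
have rank_faces_edges :
    (2 * fcard face (mem D) + #|D| <= 2 * (\rank (faces + edges) + comps))%N.
  have := mxrank_sum_cap faces edges; have := rank_faces_edges_cap.
  have := fcard_le_rank_kermx_diff F face_inj.
  have := card_le_double_rank_kermx_diff alphaK.
  lia.
have rank_cycles : \rank cycles = (#|D| - \rank boundary_mx)%N by exact: mxrank_ker.
have rank_cycles_le : (\rank cycles <= \rank (faces + edges))%N.
  have := rank_leq_row boundary_mx.
  lia.
by rewrite -(mxrank_leqif_sup faces_edges_sub).2 eqn_leq mxrankS.
Qed.

Lemma cycle_pairing_eq0 (X : D -> F) :
  (forall d, X (alpha d) = X d) ->
  (forall a : D -> F, (forall d, a (face d) = a d) -> \sum_d a d * X d = 0) ->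
  forall w, (w <= cycles)%MS -> \sum_d rv_at w d * X d = 0.
Proof.
move=> Xalpha Xface w /submx_trans/(_ cycles_sub_faces_edges)/sub_addsmxP[[a b] ->] /=.
have /kermx_diffP aface := submxMl a faces.
have /kermx_diffP balpha := submxMl b edges.
rewrite sum_rv_atD_mul (Xface _ aface) add0r.
apply: (sum_fixedpointfree_involution_pchar2 pchar_F alphaK alpha_fpf) => d.
by rewrite Xalpha balpha.
Qed.

Section Separation.
Variables (A B : {set V}) (s t : V).
Hypothesis no_face_meets_A_and_B : forall d e e',
  fconnect face d e -> fconnect face d e' -> tl e \in A -> tl e' \notin B.
Hypotheses (s_notin_A : s \notin A) (s_notin_B : s \notin B).

Let C := ~: (A :|: B).
Let K := [set v in C | connect (induced_rel (adj tl alpha) C) s v].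
Let ind (P : {set V}) v : F := (v \in P)%:R.
Let cut d := ind K (tl d) * ind A (tl (alpha d)) + ind A (tl d) * ind K (tl (alpha d)).

Let K_notin_A v : v \in K -> v \notin A.
Proof. by rewrite !inE negb_or => /andP[/andP[]]. Qed.

Let K_adj d :
  tl d \in K -> tl (alpha d) \notin A -> tl (alpha d) \notin B -> tl (alpha d) \in K.
Proof.
rewrite [tl d \in K]inE => /andP[dC sd] aA aB.
have aC : tl (alpha d) \in C by rewrite !inE negb_or aA aB.
rewrite inE aC; apply: connect_trans sd (connect1 _).
by rewrite /induced_rel dC aC; apply/existsP; exists d; rewrite !eqxx.
Qed.

Let cut_alpha d : cut (alpha d) = cut d.
Proof. by rewrite /cut alphaK addrC; congr (_ + _); apply: mulrC. Qed.

Let cut_avoid_A d : tl d \notin A -> tl (alpha d) \notin A -> cut d = 0.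
Proof. by rewrite /cut /ind => /negbTE-> /negbTE->; rewrite !(mulr0, mul0r) addr0. Qed.

Let cut_avoid_B d : tl d \notin B -> tl (alpha d) \notin B ->
  cut d = ind K (tl (alpha d)) - ind K (tl d).
Proof.
move=> dB aB; rewrite /cut /ind.
have [dK|dN] := boolP (tl d \in K); have [aK|aN] := boolP (tl (alpha d) \in K).
- by rewrite (negbTE (K_notin_A dK)) (negbTE (K_notin_A aK)) !(mulr0, mul0r) addr0 subrr.
- have aA : tl (alpha d) \in A by apply: contraR aN => aA; exact: K_adj.
  by rewrite aA (negbTE (K_notin_A dK)) mulr1n mulr0n mulr1 mul0r addr0 sub0r (oppr_pchar2 pchar_F).
- have dA : tl d \in A.
    by apply: contraR dN => dA; rewrite -[d]alphaK; apply: K_adj; rewrite ?alphaK.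
  by rewrite dA (negbTE (K_notin_A aK)) mulr1n mulr0n mulr1 mul0r add0r subr0.
- by rewrite !(mulr0, mul0r) addr0 subrr.
Qed.

Let cut_face_orthogonal (a : D -> F) :
  (forall d, a (face d) = a d) -> \sum_d a d * cut d = 0.
Proof.
move=> a_face; pose meets_A d := [exists e, fconnect face d e && (tl e \in A)].
have meets_A_face d : meets_A (face d) = meets_A d.
  by apply: eq_existsb => e; rewrite -(same_fconnect1 face_inj).
have cutE d : cut d = (meets_A d)%:R * (ind K (tl (face d)) - ind K (tl d)).
  rewrite tl_face; have [/existsP[e /andP[de eA]]|noA] := boolP (meets_A d).
    rewrite mul1r cut_avoid_B //; first exact: no_face_meets_A_and_B de (connect0 _ _) eA.
    by rewrite -tl_face; exact: no_face_meets_A_and_B de (fconnect1 _ _) eA.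
  rewrite mul0r cut_avoid_A //; apply: contra noA => ?; apply/existsP.
    by exists d; rewrite connect0.
  by exists (face d); rewrite fconnect1 tl_face.
under eq_bigr do rewrite cutE mulrA.
apply: (sum_invariant_mul_coboundary (fun d => ind K (tl d)) face_inj) => d.
by rewrite a_face meets_A_face.
Qed.

Lemma connect_induced_setCU :
  connect (induced_rel (adj tl alpha) (~: A)) s t ->
  connect (induced_rel (adj tl alpha) (~: B)) s t ->
  connect (induced_rel (adj tl alpha) (~: (A :|: B))) s t.
Proof.
move=> /connect_dart_walk[ds1 w1 /allP ds1A] /connect_dart_walk[ds2 w2 /allP ds2B].
apply: contraT => st.
have sK : s \in K by rewrite inE connect0 !inE negb_or s_notin_A s_notin_B.
have tK : t \notin K by rewrite inE (negbTE st) andbF.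
have cut1 : \sum_(d <- ds1) cut d = 0.
  by rewrite big1_seq // => d /= /ds1A; rewrite !inE => /andP[]; exact: cut_avoid_A.
have cut2 : \sum_(d <- ds2) cut d = ind K t - ind K s.
  rewrite -(dart_walk_telescope _ w2); apply: eq_big_seq => d /ds2B.
  by rewrite !inE => /andP[]; exact: cut_avoid_B.
have := cycle_pairing_eq0 cut_alpha cut_face_orthogonal (walk_chainD_cycle w1 w2).
rewrite sum_rv_atD_mul !walk_chain_pairing cut1 cut2 add0r /ind sK (negbTE tK) sub0r.
by move/eqP; rewrite oppr_eq0 oner_eq0.
Qed.

End Separation.

End PlaneMap.

End Char2Homology.

Section ColorSeparators.
Variables (V D : finType) (tl : D -> V) (alpha rot : D -> D) (m : nat)
  (sigma : V -> {set 'I_m}).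

Lemma VC_setU (S1 S2 : {set 'I_m}) : VC sigma (S1 :|: S2) = VC sigma S1 :|: VC sigma S2.
Proof.
apply/setP => v; rewrite !inE -negb_and; congr (~~ _).
rewrite !(disjoint_sym (sigma v)) -disjointU; apply: eq_disjoint => i.
by rewrite !inE.
Qed.

Lemma not_color_separator s t S : ~ color_separator tl alpha sigma s t S ->
  [/\ s \notin VC sigma S, t \notin VC sigma S &
      connect (induced_rel (adj tl alpha) (~: VC sigma S)) s t].
Proof.
move=> not_sep; apply/and3P; apply: contraT => not_all.
by case: not_sep => -[sS [tS st]]; move: not_all; rewrite sS tS st.
Qed.

Lemma connect_face_colors (S : {set 'I_m}) d e e' i j :
  fconnect (phi alpha rot) d e -> fconnect (phi alpha rot) d e' ->
  i \in S -> j \in S -> i \in sigma (tl e) -> j \in sigma (tl e') ->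
  connect (induced_rel (cig_adj tl alpha rot sigma) S) i j.
Proof.
move=> de de' iS jS ie je; have [<-|ij] := eqVneq i j; first exact: connect0.
apply: connect1; rewrite /induced_rel iS jS /cig_adj ij; apply/existsP; exists d.
by apply/andP; split; apply/bigcupP; [exists e | exists e']; rewrite // inE ?ie ?je.
Qed.

End ColorSeparators.

Theorem lemma4p6 (V D : finType) (tl : D -> V) (alpha rot : D -> D)
  (m : nat) (sigma : V -> {set 'I_m}) (s t : V) (S : {set 'I_m}) :
  plane_map tl alpha rot ->
  color_connected tl alpha sigma ->
  connect (adj tl alpha) s t ->
  minimal_color_separator tl alpha sigma s t S ->
  induced_connected (cig_adj tl alpha rot sigma) S.
Proof.
move=> [alphaK [alpha_fpf [rot_inj [tl_rot [_ [_ [_ euler]]]]]]] _ _ [sepS minS] x y xS yS.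
apply: contraT => not_xy; exfalso; apply: sepS.
pose Cx := [set i | connect (induced_rel (cig_adj tl alpha rot sigma) S) x i].
have S1S : S :&: Cx \proper S.
  by apply/properP; split; [exact: subsetIl | exists y; rewrite // !inE yS].
have S2S : S :\: Cx \proper S.
  by apply/properP; split; [exact: subsetDl | exists x; rewrite // !inE xS connect0].
have [s1 t1 st1] := not_color_separator (minS _ S1S).
have [s2 t2 st2] := not_color_separator (minS _ S2S).
rewrite -(setID S Cx) VC_setU !in_setU !negb_or s1 t1 s2 t2; do !split.
apply: (connect_induced_setCU (@pchar_Fp 2 isT) alphaK alpha_fpf rot_inj tl_rot euler _
  s1 s2 st1 st2).
move=> d e e' de de'; rewrite !inE => /pred0Pn[i /andP[ie]]; rewrite !inE => /andP[iS xi].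
apply/pred0Pn => -[j /andP[je]]; rewrite !inE => /andP[/negP xj jS]; apply: xj.
exact: connect_trans xi (connect_face_colors de de' iS jS ie je).
Qed.
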